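(* A digraph $X$ has every eigenvalue of $H(X)$ in $\{-1,1\}$ if and only if $\Gamma(X)\cong mK_2$ (the disjoint union of $m$ copies of $K_2$) for some $m$.
   Context: A digraph $X$ has a finite vertex set and an arc set of ordered pairs of distinct vertices. The underlying graph $\Gamma(X)$ is the simple graph with an edge $\{x,y\}$ whenever $xy$ or $yx$ is an arc. The Hermitian adjacency matrix $H(X)$ has $(u,v)$-entry $1$ if $uv$ and $vu$ are arcs, $i$ if only $uv$ is an arc, $-i$ if only $vu$ is an arc, and $0$ otherwise. *)

From HB Require Import structures.
From mathcomp Require Import all_boot all_order all_algebra all_field.
From mathcomp Require Import algC.
Set Implicit Arguments. Unset Strict Implicit. Unset Printing Implicit Defensive.
Import Order.TTheory GRing.Theory Num.Theory.
Local Open Scope ring_scope.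

Definition digraph (V : finType) (arc : rel V) : Prop := irreflexive arc.

Definition underlying (V : finType) (arc : rel V) : rel V :=
  fun x y => arc x y || arc y x.

Definition hermEntry (V : finType) (arc : rel V) (u v : V) : algC :=
  if arc u v && arc v u then 1
  else if arc u v then 'i
  else if arc v u then - 'i
  else 0.

Definition hermAdj (V : finType) (arc : rel V) : 'M[algC]_#|V| :=
  \matrix_(i, j) hermEntry arc (enum_val i) (enum_val j).

Definition mK2 (m : nat) : rel ('I_m * bool)%type :=
  fun p q => (p.1 == q.1) && (p.2 != q.2).

Definition graph_iso (V W : finType) (e : rel V) (f : rel W) : Prop :=
  exists g : V -> W, bijective g /\ forall x y, e x y = f (g x) (g y).
Arguments mK2 m : clear implicits.

From mathcomp Require Import all_boot all_order all_algebra all_field.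
Set Implicit Arguments. Unset Strict Implicit. Unset Printing Implicit Defensive.
Import GRing.Theory Num.Theory.
Local Open Scope ring_scope.

(* H(X) is Hermitian, hence unitarily diagonalizable, so its eigenvalues all
   lie in {1, -1} exactly when H(X)^2 = I.  As H_uv H_vu is 1 on edges of
   Gamma(X) and 0 elsewhere, the diagonal entry (u, u) of H(X)^2 is the degree
   of u; so H(X)^2 = I forces every vertex u to have exactly one neighbour p u,
   i.e. Gamma(X) is a perfect matching, that is m K_2.  Conversely, given such
   a neighbour map p, the only possibly nonzero term of (H^2)_uv is
   H_u(pu) H_(pu)v, and it vanishes unless v = p (p u) = u. *)

Lemma eigenvalue_sqr_id (F : fieldType) n (A : 'M[F]_n) a :
  A *m A = 1%:M -> eigenvalue A a -> a = 1 \/ a = -1.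
Proof.
move=> AA /eigenvalueP [v Av nz_v].
have : v *m (A *m A) = a ^+ 2 *: v.
  by rewrite mulmxA Av -scalemxAl Av scalerA expr2.
rewrite AA mulmx1 => /eqP; rewrite -subr_eq0 -{1}[v]scale1r -scalerBl scaler_eq0.
rewrite (negbTE nz_v) orbF subr_eq0 eq_sym sqrf_eq1.
by case/orP=> /eqP->; [left | right].
Qed.

Lemma eigenvalue_diag_similar (F : fieldType) n (P : 'M[F]_n) (d : 'rV_n) i :
  P \in unitmx -> eigenvalue (invmx P *m diag_mx d *m P) (d 0 i).
Proof.
move=> P_unit; apply/eigenvalueP; exists (delta_mx 0 i *m P).
  by rewrite !mulmxA (mulmxK P_unit) -rowE row_diag_mx scalemxAl.
apply: contraNneq (oner_neq0 F) => /(congr1 (mulmx^~ (invmx P))).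
rewrite /= (mulmxK P_unit) mul0mx => /matrixP /(_ 0 i) /eqP.
by rewrite !mxE !eqxx.
Qed.

Lemma normalmx_sqr_id (C : numClosedFieldType) n (A : 'M[C]_n) :
  A \is normalmx -> (forall a, eigenvalue A a -> a = 1 \/ a = -1) ->
  A *m A = 1%:M.
Proof.
move=> /orthomx_spectralP; set P := spectralmx A; set d := spectral_diag A.
move=> defA spec_pm1; have P_unit : P \in unitmx := spectral_unit A.
have d_sqr : diag_mx d *m diag_mx d = 1%:M.
  rewrite mul_mx_diag; apply/matrixP => i j; rewrite !mxE.
  case: eqP => [<-|_]; rewrite ?mul0r //= mulr1n.
  have /spec_pm1[->|->] : eigenvalue A (d 0 i).
  - by rewrite defA eigenvalue_diag_similar.
  - by rewrite mulr1.
  - by rewrite mulrNN mulr1.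
by rewrite defA !mulmxA (mulmxK P_unit) -(mulmxA (invmx P)) d_sqr mulmx1 mulVmx.
Qed.

Definition partner_map (V : finType) (e : rel V) (p : V -> V) : Prop :=
  forall u v, e u v = (v == p u).

Lemma mK2_partner m : partner_map (mK2 m) (fun q => (q.1, ~~ q.2)).
Proof. by move=> [i b] [j c]; rewrite /mK2 xpair_eqE eq_sym; case: b; case: c. Qed.

Lemma graph_iso_partner (V W : finType) (e : rel V) (f : rel W) (q : W -> W) :
  graph_iso e f -> partner_map f q -> exists p, partner_map e p.
Proof.
move=> [g [[h gK hK] eg]] fq; exists (h \o q \o g) => u v.
by rewrite eg fq /= -[v == _](can_eq gK) hK.
Qed.

Section PartnerMap.
Variables (V : finType) (e : rel V) (p : V -> V).
Hypotheses (e_sym : symmetric e) (e_irr : irreflexive e) (ep : partner_map e p).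

Lemma partner_map_involutive : involutive p.
Proof. by move=> u; apply/esym/eqP; rewrite -ep e_sym ep. Qed.

Lemma partner_map_neq u : p u != u.
Proof. by rewrite eq_sym -ep e_irr. Qed.

Lemma partner_map_iso_mK2 : exists m, graph_iso e (mK2 m).
Proof.
have ppK := partner_map_involutive.
(* S picks the vertex of smaller rank in each pair {u, p u}; u is sent to the
   index of the representative of its pair, tagged by whether u is it. *)
pose S := [set u | (enum_rank u < enum_rank (p u))%N].
have notin_S u : (p u \in S) = (u \notin S).
  rewrite !inE ppK; case: ltngtP => // /val_inj /enum_rank_inj pu_u.
  by have := partner_map_neq u; rewrite pu_u eqxx.
pose r u := if u \in S then u else p u.
have r_S u : r u \in S by rewrite /r; case: ifP; rewrite // notin_S => ->.
pose g u := (enum_rank_in (r_S u) (r u), u \in S).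
have g1 u : enum_val (g u).1 = r u by apply: enum_rankK_in.
pose h (q : 'I_#|S| * bool) := if q.2 then enum_val q.1 else p (enum_val q.1).
have h_S q : (h q \in S) = q.2.
  by rewrite /h; case: q.2; rewrite ?notin_S enum_valP.
have r_h q : r (h q) = enum_val q.1.
  by rewrite /r h_S /h; case: q.2.
exists #|S|, g; split.
  exists h => [u | [i b]]; first by rewrite /h g1 /= /r; case: (u \in S).
  congr (_, _); last exact: h_S.
  by apply: enum_val_inj; rewrite g1 r_h.
move=> u v; rewrite /mK2 -(inj_eq enum_val_inj) !g1 /= ep /r.
case: (boolP (u \in S)) => u_S; case: (boolP (v \in S)) => v_S /=;
  rewrite ?andbT ?andbF.
- by apply/negbTE; apply: contraTneq v_S => ->; rewrite notin_S negbK.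
- by apply/eqP/eqP => ->; rewrite ppK.
- exact: eq_sym.
- by apply/negbTE; apply: contraNneq v_S => ->; rewrite notin_S.
Qed.

End PartnerMap.

Section HermitianAdjacency.
Variables (V : finType) (arc : rel V).

Lemma underlying_sym : symmetric (underlying arc).
Proof. by move=> u v; rewrite /underlying orbC. Qed.

Lemma underlying_irr : digraph arc -> irreflexive (underlying arc).
Proof. by move=> irr_arc u; rewrite /underlying irr_arc. Qed.

Lemma hermEntry_conj u v : (hermEntry arc u v)^* = hermEntry arc v u.
Proof.
rewrite /hermEntry; case: (arc u v); case: (arc v u) => /=;
  by rewrite ?conjC1 ?conjC0 ?conjCi // -conjCi conjCK.
Qed.

Lemma hermEntry_mul_swap u v :
  hermEntry arc u v * hermEntry arc v u = (underlying arc u v)%:R.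
Proof.
rewrite /underlying /hermEntry; case: (arc u v); case: (arc v u) => /=;
  by rewrite ?mulr1 ?mulr0 ?mulrN ?mulNr ?mulCii ?opprK.
Qed.

Lemma hermEntry_eq0 u v : ~~ underlying arc u v -> hermEntry arc u v = 0.
Proof. by rewrite /hermEntry negb_or => /andP[/negbTE-> /negbTE->]. Qed.

Lemma hermAdj_normal : hermAdj arc \is normalmx.
Proof.
have selfadj : ((hermAdj arc)^t*)%sesqui = hermAdj arc.
  by apply/matrixP => i j; rewrite !mxE hermEntry_conj.
by apply/normalmxP; rewrite selfadj.
Qed.

Lemma hermAdj_sqrE i k : (hermAdj arc *m hermAdj arc) i k =
  \sum_w hermEntry arc (enum_val i) w * hermEntry arc w (enum_val k).
Proof. by rewrite mxE [RHS]big_enum_val; apply: eq_bigr => j _; rewrite !mxE. Qed.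

Lemma hermAdj_sqr_diag u :
  (hermAdj arc *m hermAdj arc) (enum_rank u) (enum_rank u) =
  #|[pred w | underlying arc u w]|%:R.
Proof.
rewrite hermAdj_sqrE enum_rankK (eq_bigr _ (fun w _ => hermEntry_mul_swap u w)).
rewrite -natr_sum -sum1_card; congr _%:R; rewrite [RHS]big_mkcond.
by apply: eq_bigr => w _; rewrite inE; case: underlying.
Qed.

Lemma hermAdj_sqr_id_partner :
  hermAdj arc *m hermAdj arc = 1%:M -> exists p, partner_map (underlying arc) p.
Proof.
move=> sqr1.
apply: (@fin_all_exists _ _ (fun u w => forall v, _ = (v == w))) => u.
have /card1P[w defw] : #|[pred w | underlying arc u w]| == 1%N.
  have := hermAdj_sqr_diag u; rewrite sqr1 mxE eqxx => /esym/eqP.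
  by rewrite pnatr_eq1.
by exists w => v; have := defw v; rewrite !inE.
Qed.

Lemma partner_hermAdj_sqr_id p :
  partner_map (underlying arc) p -> hermAdj arc *m hermAdj arc = 1%:M.
Proof.
move=> ep; apply/matrixP => i k; rewrite hermAdj_sqrE mxE.
rewrite (bigD1 (p (enum_val i))) //= big1 ?addr0 => [|w /negbTE w_pu];
  last by rewrite hermEntry_eq0 ?mul0r // ep w_pu.
have [<-|ik] := eqVneq i k; first by rewrite hermEntry_mul_swap ep eqxx.
rewrite [hermEntry _ _ (enum_val k)]hermEntry_eq0 ?mulr0 //.
rewrite ep (partner_map_involutive underlying_sym ep).
by rewrite (inj_eq enum_val_inj) eq_sym ik.
Qed.

End HermitianAdjacency.

Theorem theorem9p1 (V : finType) (arc : rel V) (hX : digraph arc) :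
  (forall a : algC, eigenvalue (hermAdj arc) a -> a = 1 \/ a = -1) <->
  (exists m : nat, graph_iso (underlying arc) (mK2 m)).
Proof.
split=> [spec_pm1 | [m iso_mK2] a].
- have sqr1 := normalmx_sqr_id (hermAdj_normal arc) spec_pm1.
  have [p ep] := hermAdj_sqr_id_partner sqr1.
  exact: partner_map_iso_mK2 (underlying_sym arc) (underlying_irr hX) ep.
- have [p ep] := graph_iso_partner iso_mK2 (@mK2_partner m).
  exact/eigenvalue_sqr_id/partner_hermAdj_sqr_id/ep.
Qed.
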